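(* Let $M\ge 3$ be an integer, let $c>0$, $f_c>0$, $d>0$, $R_D>0$ and $\theta_D\in(-\pi/2,\pi/2)$. Take all frequency offsets zero, i.e. $\Delta f_m=0$ for all $m$, so that $\xi_m=-\frac{d^2 f_c}{2R_D^2}(m-1)^2$ for $m=1,\dots,M$, and define $$X=\frac{4\pi^2}{c^2}\sum_{m=1}^M\sum_{n=1}^M(\xi_m-\xi_n)^2,\qquad Y=\frac{4\pi^2 d f_c\cos\theta_D}{c^2}\sum_{m=1}^M\sum_{n=1}^M (\xi_m-\xi_n)(m-n),\qquad Z=\frac{4\pi^2 f_c^2 d^2\cos^2\theta_D}{c^2}\sum_{m=1}^M\sum_{n=1}^M (m-n)^2 .$$ Let $E=\{(R,\theta)\in\mathbb{R}^2: X(R-R_D)^2+2Y(R-R_D)(\theta-\theta_D)+Z(\theta-\theta_D)^2=M^2\}$. Then $XZ>Y^2$, $E$ is an ellipse centred at $(R_D,\theta_D)$, and the area $S$ it encloses, the range extent $\Delta_R=\max_E R-\min_E R$ and the angular extent $\Delta_\theta=\max_E\theta-\min_E\theta$ are $$S=\frac{3\sqrt{15}\,c^2R_D^2}{\pi f_c^2 d^3\cos\theta_D\,(M^2-1)\sqrt{M^2-4}},\qquad \Delta_R=\frac{6\sqrt{10}\,cR_D^2}{\pi f_c d^2\sqrt{(M^2-1)(M^2-4)}},$$ $$\Delta_\theta=\frac{c\sqrt{6(16M^2-30M+11)}}{\pi f_c d\cos\theta_D\sqrt{(M^2-1)(M^2-4)}} .$$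
   Context: Physical setting: a conventional phased uniform linear array ($M$ antennas, spacing $d$, carrier $f_c$, no frequency offsets) focusing on a target at range $R_D$, angle $\theta_D$; $E$ models the half-power boundary of the beampattern in the (range, angle) plane, with $S$ its area and $\Delta_R$, $\Delta_\theta$ the main-lobe beamwidths in range and angle. *)

From HB Require Import structures.
From mathcomp Require Import all_boot all_order all_algebra.
From mathcomp Require Import all_classical all_reals all_analysis.
Set Implicit Arguments. Unset Strict Implicit. Unset Printing Implicit Defensive.
Import Order.TTheory GRing.Theory Num.Theory.
Local Open Scope classical_set_scope.
Local Open Scope ring_scope.

(* Zero frequency offsets: xi_m for m = i+1, i : 'I_M *)
Definition xi {R : realType} (d fc RD : R) (i : nat) : R :=
  - (d ^+ 2 * fc / (2 * RD ^+ 2)) * (i%:R) ^+ 2.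

Definition beamX {R : realType} (M : nat) (c d fc RD : R) : R :=
  4 * pi ^+ 2 / c ^+ 2 *
  \sum_(m < M) \sum_(n < M) (xi d fc RD m - xi d fc RD n) ^+ 2.

Definition beamY {R : realType} (M : nat) (c d fc RD thD : R) : R :=
  4 * pi ^+ 2 * d * fc * cos thD / c ^+ 2 *
  \sum_(m < M) \sum_(n < M)
     (xi d fc RD m - xi d fc RD n) * ((m%:R : R) - n%:R).

Definition beamZ {R : realType} (M : nat) (c d fc thD : R) : R :=
  4 * pi ^+ 2 * fc ^+ 2 * d ^+ 2 * cos thD ^+ 2 / c ^+ 2 *
  \sum_(m < M) \sum_(n < M) ((m%:R : R) - n%:R) ^+ 2.

Definition quadE {R : realType} (X Y Z RD thD : R) (p : R * R) : R :=
  X * (p.1 - RD) ^+ 2 + 2 * Y * (p.1 - RD) * (p.2 - thD) + Z * (p.2 - thD) ^+ 2.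

Definition is_ellipse_centred {R : realType} (E : set (R * R)) (x0 y0 : R) : Prop :=
  exists A B C : R, 0 < A /\ B ^+ 2 < A * C /\
    E = [set p | A * (p.1 - x0) ^+ 2 + 2 * B * (p.1 - x0) * (p.2 - y0)
                 + C * (p.2 - y0) ^+ 2 = 1].

Definition enclosed {R : realType} (X Y Z RD thD k : R) : set (R * R) :=
  [set p | quadE X Y Z RD thD p <= k].

Definition is_max {R : realType} (A : set R) (x : R) : Prop :=
  A x /\ forall y, A y -> y <= x.
Definition is_min {R : realType} (A : set R) (x : R) : Prop :=
  A x /\ forall y, A y -> x <= y.

From HB Require Import structures.
From mathcomp Require Import all_boot all_order all_algebra.
From mathcomp Require Import all_classical all_reals all_analysis.
From mathcomp Require Import ring lra.
Import Order.TTheory GRing.Theory Num.Theory.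
Import numFieldNormedType.Exports.
Local Open Scope classical_set_scope.
Local Open Scope ring_scope.

(* The identity sum_(m,n) (g_m - g_n)(h_m - h_n) = 2 M sum g h - 2 (sum g)(sum h)
   reduces the three double sums to power sums, which gives X, Y, Z in closed form
   and X Z - Y^2 = (4 pi^2 a fc d cos thD / c^2)^2 M^4 (M^2-1)^2 (M^2-4) / 540 > 0
   for M >= 3, where a = d^2 fc / (2 RD^2).
   For a positive definite form q(u, v) = A u^2 + 2 B u v + C v^2, completing the square
   C q = (C v + B u)^2 + (A C - B^2) u^2 shows that u ranges exactly over
   [-r, r], r = sqrt (K C / (A C - B^2)), on the level set {q = K}, and that the
   sections of {q <= K} at fixed u are intervals of length
   (2 sqrt (A C - B^2) / C) sqrt (r^2 - u^2); integrating this half-disc profile with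
   u = r sin t gives the area pi K / sqrt (A C - B^2). *)

Lemma double_sum_mulBB {R : comPzRingType} (M : nat) (g h : nat -> R) :
  \sum_(m < M) \sum_(n < M) (g m - g n) * (h m - h n) =
  2 * M%:R * \sum_(i < M) g i * h i - 2 * (\sum_(i < M) g i) * \sum_(i < M) h i.
Proof.
have inner m : \sum_(n < M) (g m - g n) * (h m - h n) =
    M%:R * (g m * h m) + \sum_(n < M) g n * h n
    - g m * \sum_(n < M) h n - h m * \sum_(n < M) g n.
  have expand n : (g m - g n) * (h m - h n) = g m * h m + g n * h n - g m * h n - h m * g n.
    by ring.
  under eq_bigr do rewrite expand.
  by rewrite !sumrB big_split /= -!mulr_sumr sumr_const card_ord mulr_natl mulrnAr.
under eq_bigr do rewrite inner.
rewrite !sumrB big_split /= -!mulr_sumr -!mulr_suml sumr_const card_ord -mulr_natl.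
by ring.
Qed.

Section DoubleSums.
Variable R : numFieldType.
Implicit Type M : nat.

Definition power_sum (k M : nat) : R := \sum_(i < M) i%:R ^+ k.

Lemma power_sum1 M : power_sum 1 M = M%:R * (M%:R - 1) / 2.
Proof.
elim: M => [|M IH]; first by rewrite /power_sum big_ord0 !mul0r.
by rewrite /power_sum big_ord_recr /= -/(power_sum 1 M) IH -natr1; field.
Qed.

Lemma power_sum2 M : power_sum 2 M = M%:R * (M%:R - 1) * (2 * M%:R - 1) / 6.
Proof.
elim: M => [|M IH]; first by rewrite /power_sum big_ord0 !mul0r.
by rewrite /power_sum big_ord_recr /= -/(power_sum 2 M) IH -natr1; field.
Qed.

Lemma power_sum3 M : power_sum 3 M = (M%:R * (M%:R - 1)) ^+ 2 / 4.
Proof.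
elim: M => [|M IH]; first by rewrite /power_sum big_ord0 mul0r expr0n mul0r.
by rewrite /power_sum big_ord_recr /= -/(power_sum 3 M) IH -natr1; field.
Qed.

Lemma power_sum4 M :
  power_sum 4 M =
  M%:R * (M%:R - 1) * (2 * M%:R - 1) * (3 * M%:R ^+ 2 - 3 * M%:R - 1) / 30.
Proof.
elim: M => [|M IH]; first by rewrite /power_sum big_ord0 !mul0r.
by rewrite /power_sum big_ord_recr /= -/(power_sum 4 M) IH -natr1; field.
Qed.

Lemma double_sum_mulBB_power_sum M (j k : nat) :
  \sum_(m < M) \sum_(n < M) ((m%:R : R) ^+ j - n%:R ^+ j) * (m%:R ^+ k - n%:R ^+ k) =
  2 * M%:R * power_sum (j + k) M - 2 * power_sum j M * power_sum k M.
Proof.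
rewrite (double_sum_mulBB M (fun i => i%:R ^+ j) (fun i => i%:R ^+ k)) /power_sum.
by under eq_bigr do rewrite -exprD.
Qed.

Lemma double_sum_subr_sqr M :
  \sum_(m < M) \sum_(n < M) ((m%:R : R) - n%:R) ^+ 2 = M%:R ^+ 2 * (M%:R ^+ 2 - 1) / 6.
Proof.
under eq_bigr do under eq_bigr do rewrite expr2 -[_ - _]/(_ ^+ 1 - _ ^+ 1).
by rewrite double_sum_mulBB_power_sum power_sum2 power_sum1; field.
Qed.

Lemma double_sum_subr_sqr_sqr M :
  \sum_(m < M) \sum_(n < M) ((m%:R : R) ^+ 2 - n%:R ^+ 2) ^+ 2 =
  M%:R ^+ 2 * (M%:R - 1) * (2 * M%:R - 1) * (8 * M%:R ^+ 2 - 3 * M%:R - 11) / 90.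
Proof.
under eq_bigr do under eq_bigr do rewrite expr2.
by rewrite double_sum_mulBB_power_sum power_sum4 power_sum2; field.
Qed.

Lemma double_sum_subr_sqr_mul_subr M :
  \sum_(m < M) \sum_(n < M) ((m%:R : R) ^+ 2 - n%:R ^+ 2) * (m%:R - n%:R) =
  M%:R ^+ 2 * (M%:R - 1) ^+ 2 * (M%:R + 1) / 6.
Proof.
under eq_bigr do under eq_bigr do rewrite -[_%:R - _%:R]/(_ ^+ 1 - _ ^+ 1).
by rewrite double_sum_mulBB_power_sum power_sum3 power_sum2 power_sum1; field.
Qed.
End DoubleSums.

Lemma sqrtr_gt0_spec {R : rcfType} {x : R} : 0 < x ->
  exists s, [/\ 0 < s, s ^+ 2 = x & Num.sqrt x = s].
Proof. by move=> x_gt0; exists (Num.sqrt x); rewrite sqrtr_gt0 sqr_sqrtr // ltW. Qed.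

Section SemicircleIntegral.
Variable R : realType.
Local Notation mu := (@lebesgue_measure R).

Lemma lebesgue_measure_sqr_le (m s : R) :
  mu [set y | (y - m) ^+ 2 <= s] = (2 * Num.sqrt s)%:E.
Proof.
have [s_lt0 | s_ge0] := ltP s 0.
  rewrite ltr0_sqrtr // mulr0 (_ : [set y | _] = set0) ?measure0 //.
  by apply/seteqP; split=> y //= y_le; have := sqr_ge0 (y - m); lra.
rewrite (_ : [set y | _] = `[m - Num.sqrt s, m + Num.sqrt s]%classic); last first.
  by apply/seteqP; split=> y /=; rewrite in_itv /= -ler_distl -sqrtr_sqr ler_sqrt.
rewrite lebesgue_measure_itv /= lte_fin; case: ltP => [_ | degenerate].
  by rewrite -EFinB; congr EFin; ring.
have -> : Num.sqrt s = 0 by have := sqrtr_ge0 s; lra.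
by rewrite mulr0.
Qed.

Lemma integral_cos_sqr (k : R) :
  (\int[mu]_(t in `[(- (pi / 2))%R, (pi / 2)%R]) (k * cos t ^+ 2)%:E)%E = (k * pi / 2)%:E.
Proof.
pose P t : R := k / 2 * (t + sin t * cos t).
have dP (t : R) : is_derive t 1 P (k * cos t ^+ 2).
  by apply: is_derive_eq; rewrite /GRing.scale /= !mulrN -!expr2 !cos2sin2; field.
have P_cont : continuous P.
  by move=> t; apply/differentiable_continuous/derivable1_diffP; exact: ex_derive.
have pi_gt0 : 0 < pi :> R := pi_gt0 R.
rewrite (@continuous_FTC2 R _ P).
- by rewrite -EFinB /P !(sinN, cosN, sin_pihalf, cos_pihalf); congr EFin; field.
- lra.
- apply: continuous_subspaceT => t; apply: cvgM; first exact: cvg_cst.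
  by rewrite expr2; apply: cvgM; exact: continuous_cos.
- split; first by move=> t _; exact: ex_derive.
  + exact: cvg_at_right_filter (P_cont _).
  + exact: cvg_at_left_filter (P_cont _).
- by move=> t _; rewrite derive1E derive_val.
Qed.

Lemma integral_semicircle (a x0 r : R) : 0 < r ->
  (\int[mu]_x (a * Num.sqrt (r ^+ 2 - (x - x0) ^+ 2))%:E)%E = (a * pi * r ^+ 2 / 2)%:E.
Proof.
move=> r_gt0; pose h x := a * Num.sqrt (r ^+ 2 - (x - x0) ^+ 2).
have pi_gt0 : 0 < pi :> R := pi_gt0 R.
transitivity (\int[mu]_(x in `[(x0 - r)%R, (x0 + r)%R]) (h x)%:E)%E.
  rewrite [RHS]integral_mkcond; apply: eq_integral => x _.
  rewrite patchE; case: ifPn => // x_out.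
  rewrite /h ltr0_sqrtr ?mulr0 //.
  move: x_out; rewrite notin_setE /= in_itv /= => /negP; rewrite -ler_distl -ltNge => r_lt.
  by rewrite subr_lt0 -(real_normK (num_real (x - x0))); move: r_gt0 r_lt; nra.
pose F t := x0 + r * sin t.
have dF (t : R) : is_derive t 1 F (r * cos t).
  have := @is_deriveD R R R (cst x0) (fun t => r * sin t) t 1 0 (r * cos t).
  by rewrite add0r; apply.
have F' : F^`()%classic = fun t => r * cos t by apply/funext => t; rewrite derive1E derive_val.
have F_cont : continuous F.
  by move=> t; apply/differentiable_continuous/derivable1_diffP; exact: ex_derive.
have F'_cont : continuous (fun t => r * cos t).
  by move=> t; apply: cvgM; [exact: cvg_cst | exact: continuous_cos].
have h_cont : continuous h.
  move=> x; apply: cvgM; first exact: cvg_cst.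
  apply: continuous_comp; last exact: sqrt_continuous.
  apply: cvgB; first exact: cvg_cst.
  by rewrite expr2; apply: cvgM; apply: cvgB; (exact: cvg_id || exact: cvg_cst).
have := @integration_by_substitution_increasing R F h (- (pi / 2)) (pi / 2).
rewrite /F sinN sin_pihalf mulrN1 mulr1 -/F => ->; first last.
- exact: continuous_subspaceT.
- split; first by move=> t _; exact: ex_derive.
  + exact: cvg_at_right_filter (F_cont _).
  + exact: cvg_at_left_filter (F_cont _).
- by rewrite F'; apply/cvg_ex; exists (r * cos (pi / 2)); exact: cvg_at_left_filter (F'_cont _).
- by rewrite F'; apply/cvg_ex; exists (r * cos (- (pi / 2))); exact: cvg_at_right_filter (F'_cont _).
- by rewrite F' => t _; exact: F'_cont.
- by move=> x y x_in y_in xy; rewrite /F ltrD2l ltr_pM2l // ltr_sin.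
- lra.
rewrite (_ : a * pi * r ^+ 2 / 2 = a * r ^+ 2 * pi / 2); last by ring.
rewrite -integral_cos_sqr; apply: eq_integral => t.
rewrite inE /= in_itv /= => t_in; rewrite F'; congr EFin.
change (a * Num.sqrt (r ^+ 2 - (x0 + r * sin t - x0) ^+ 2) * (r * cos t) = a * r ^+ 2 * cos t ^+ 2).
have -> : r ^+ 2 - (x0 + r * sin t - x0) ^+ 2 = (r * cos t) ^+ 2.
  by rewrite exprMn cos2sin2; ring.
rewrite sqrtr_sqr ger0_norm; last by rewrite mulr_ge0 ?cos_ge0_pihalf // ltW.
by ring.
Qed.
End SemicircleIntegral.

Section PositiveDefiniteForm.
Context {R : realType} {A B C : R} (x0 y0 : R).
Hypotheses (C_gt0 : 0 < C) (disc_gt0 : 0 < A * C - B ^+ 2).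

Local Notation D := (A * C - B ^+ 2).
Local Notation q := (quadE A B C x0 y0).

Lemma quadE_lead_gt0 : 0 < A.
Proof.
have B2_ge0 : 0 <= B ^+ 2 := sqr_ge0 B.
have AC_gt0 : 0 < A * C by move: disc_gt0; lra.
by rewrite -(pmulr_lgt0 _ C_gt0).
Qed.

Lemma quadE_complete_square (p : R * R) :
  C * q p = (C * (p.2 - y0) + B * (p.1 - x0)) ^+ 2 + D * (p.1 - x0) ^+ 2.
Proof. by rewrite /quadE; ring. Qed.

Lemma quadE_level_is_ellipse (K : R) : 0 < K ->
  is_ellipse_centred [set p | q p = K] x0 y0.
Proof.
move=> K_gt0; have K_neq0 : K != 0 by rewrite gt_eqF.
exists (A / K), (B / K), (C / K); split; last split.
- by rewrite divr_gt0 ?quadE_lead_gt0.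
- rewrite -subr_gt0 (_ : _ - _ = D / K ^+ 2); last by field.
  by rewrite divr_gt0 ?exprn_gt0.
- have scaled p : A / K * (p.1 - x0) ^+ 2 + 2 * (B / K) * (p.1 - x0) * (p.2 - y0)
      + C / K * (p.2 - y0) ^+ 2 = q p / K by rewrite /quadE; field.
  by apply/seteqP; split=> p /=; rewrite scaled; [move=> ->; rewrite divff | move/divr1_eq].
Qed.

Lemma quadE_fst_dist (K : R) (p : R * R) :
  q p <= K -> `|p.1 - x0| <= Num.sqrt (K * C / D).
Proof.
move=> qpK.
have DuKC : D * (p.1 - x0) ^+ 2 <= K * C.
  have := quadE_complete_square p; have := sqr_ge0 (C * (p.2 - y0) + B * (p.1 - x0)).
  by rewrite mulrC; move: C_gt0 qpK; nra.
have u2_le : (p.1 - x0) ^+ 2 <= K * C / D by rewrite ler_pdivlMr // mulrC.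
by rewrite -sqrtr_sqr ler_sqrt // (le_trans (sqr_ge0 _) u2_le).
Qed.

Lemma quadE_fst_extremal (K s : R) :
  s ^+ 2 = K * C / D -> q (x0 + s, y0 - B * s / C) = K.
Proof.
move=> s2; apply: (mulfI (lt0r_neq0 C_gt0)); rewrite quadE_complete_square /= (addrC x0) addrK s2.
by field; rewrite !gt_eqF.
Qed.

Lemma quadE_level_fst_extent (K : R) : 0 <= K ->
  let r := Num.sqrt (K * C / D) in
  is_max (fst @` [set p | q p = K]) (x0 + r) /\
  is_min (fst @` [set p | q p = K]) (x0 - r).
Proof.
move=> K_ge0 r; have r2 : r ^+ 2 = K * C / D.
  by rewrite sqr_sqrtr // divr_ge0 ?mulr_ge0 // ltW.
have bound y : (fst @` [set p | q p = K]) y -> x0 - r <= y <= x0 + r.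
  by case=> p qpK <-; rewrite -ler_distl quadE_fst_dist // qpK.
split; split.
- by exists (x0 + r, y0 - B * r / C) => //; apply: quadE_fst_extremal.
- by move=> y /bound /andP[].
- by exists (x0 + - r, y0 - B * - r / C) => //; apply: quadE_fst_extremal; rewrite sqrrN.
- by move=> y /bound /andP[].
Qed.

Lemma xsection_enclosed (K x : R) :
  xsection (enclosed A B C x0 y0 K) x =
  [set y | (y - (y0 - B * (x - x0) / C)) ^+ 2 <= (K * C - D * (x - x0) ^+ 2) / C ^+ 2].
Proof.
have in_section y : (q (x, y) <= K) =
    ((y - (y0 - B * (x - x0) / C)) ^+ 2 <= (K * C - D * (x - x0) ^+ 2) / C ^+ 2).
  have sq : (y - (y0 - B * (x - x0) / C)) ^+ 2 - (K * C - D * (x - x0) ^+ 2) / C ^+ 2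
      = (q (x, y) - K) / C by rewrite /quadE /=; field; rewrite gt_eqF.
  by rewrite -[RHS]subr_le0 sq pmulr_lle0 ?invr_gt0 // subr_le0.
by apply/seteqP; split=> y; rewrite /xsection /enclosed /= inE /= in_section.
Qed.

Lemma enclosed_measure (K : R) : 0 < K ->
  ((lebesgue_measure \x lebesgue_measure)%E (enclosed A B C x0 y0 K) =
   (pi * K / Num.sqrt D)%:E).
Proof.
move=> K_gt0; rewrite /product_measure1 /=.
set r := Num.sqrt (K * C / D).
have r_gt0 : 0 < r by rewrite sqrtr_gt0 divr_gt0 ?mulr_gt0.
have sqrtD_gt0 : 0 < Num.sqrt D by rewrite sqrtr_gt0.
have section_len x : (K * C - D * (x - x0) ^+ 2) / C ^+ 2 =
    (Num.sqrt D / C) ^+ 2 * (r ^+ 2 - (x - x0) ^+ 2).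
  by rewrite expr_div_n !sqr_sqrtr ?divr_ge0 ?mulr_ge0 ?ltW //; field; rewrite !gt_eqF.
under eq_integral do rewrite xsection_enclosed lebesgue_measure_sqr_le section_len
  sqrtrM ?sqr_ge0 // sqrtr_sqr ger0_norm ?divr_ge0 ?ltW // mulrA.
rewrite integral_semicircle //; congr EFin.
rewrite sqr_sqrtr ?divr_ge0 ?mulr_ge0 ?ltW //.
by rewrite -{2}(sqr_sqrtr (ltW disc_gt0)); field; rewrite !gt_eqF.
Qed.
End PositiveDefiniteForm.

Lemma quadE_swap (R : realType) (A B C x0 y0 : R) (p : R * R) :
  quadE A B C x0 y0 p = quadE C B A y0 x0 (p.2, p.1).
Proof. by rewrite /quadE /=; ring. Qed.

Lemma quadE_level_snd_extent {R : realType} {A B C : R} (x0 y0 : R) :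
  0 < C -> 0 < A * C - B ^+ 2 -> forall K : R, 0 <= K ->
  let r := Num.sqrt (K * A / (A * C - B ^+ 2)) in
  is_max (snd @` [set p | quadE A B C x0 y0 p = K]) (y0 + r) /\
  is_min (snd @` [set p | quadE A B C x0 y0 p = K]) (y0 - r).
Proof.
move=> C_gt0 disc_gt0 K K_ge0 r.
have -> : snd @` [set p | quadE A B C x0 y0 p = K] = fst @` [set p | quadE C B A y0 x0 p = K].
  apply/seteqP; split=> y [[u v] /= quv <-].
  - by exists (v, u); rewrite //= -quv quadE_swap.
  - by exists (v, u); rewrite //= -quv quadE_swap.
have A_gt0 := quadE_lead_gt0 C_gt0 disc_gt0.
rewrite /r mulrC in disc_gt0 *.
exact: quadE_level_fst_extent.
Qed.

Section BeamPattern.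
Variables (R : realType) (M : nat) (c fc d RD thD : R).

Local Notation N := (M%:R : R).
Local Notation a := (d ^+ 2 * fc / (2 * RD ^+ 2)).
Local Notation X := (beamX M c d fc RD).
Local Notation Y := (beamY M c d fc RD thD).
Local Notation Z := (beamZ M c d fc thD).

Lemma xiB (m n : nat) : xi d fc RD m - xi d fc RD n = - a * (m%:R ^+ 2 - n%:R ^+ 2).
Proof. by rewrite /xi; ring. Qed.

Lemma beamXE : X = 4 * pi ^+ 2 / c ^+ 2 * a ^+ 2 *
  (N ^+ 2 * (N - 1) * (2 * N - 1) * (8 * N ^+ 2 - 3 * N - 11) / 90).
Proof.
have scale : \sum_(m < M) \sum_(n < M) (xi d fc RD m - xi d fc RD n) ^+ 2 =
    a ^+ 2 * \sum_(m < M) \sum_(n < M) ((m%:R : R) ^+ 2 - n%:R ^+ 2) ^+ 2.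
  rewrite mulr_sumr; apply: eq_bigr => m _; rewrite mulr_sumr; apply: eq_bigr => n _.
  by rewrite xiB exprMn sqrrN.
by rewrite /beamX scale double_sum_subr_sqr_sqr mulrA.
Qed.

Lemma beamYE : Y = 4 * pi ^+ 2 * d * fc * cos thD / c ^+ 2 * - a *
  (N ^+ 2 * (N - 1) ^+ 2 * (N + 1) / 6).
Proof.
have scale : \sum_(m < M) \sum_(n < M) (xi d fc RD m - xi d fc RD n) * ((m%:R : R) - n%:R) =
    - a * \sum_(m < M) \sum_(n < M) ((m%:R : R) ^+ 2 - n%:R ^+ 2) * (m%:R - n%:R).
  rewrite mulr_sumr; apply: eq_bigr => m _; rewrite mulr_sumr; apply: eq_bigr => n _.
  by rewrite xiB; ring.
by rewrite /beamY scale double_sum_subr_sqr_mul_subr; ring.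
Qed.

Lemma beamZE : Z = 4 * pi ^+ 2 * fc ^+ 2 * d ^+ 2 * cos thD ^+ 2 / c ^+ 2 *
  (N ^+ 2 * (N ^+ 2 - 1) / 6).
Proof. by rewrite /beamZ double_sum_subr_sqr. Qed.

Hypotheses (M_ge3 : (3 <= M)%N) (c_gt0 : 0 < c) (fc_gt0 : 0 < fc) (d_gt0 : 0 < d)
  (RD_gt0 : 0 < RD) (thD_range : - (pi / 2) < thD < pi / 2).

Let N_ge3 : 3 <= N. Proof. by rewrite ler_nat. Qed.
Let N_gt0 : 0 < N. Proof. by apply: lt_le_trans N_ge3. Qed.
Let N2B1_gt0 : 0 < N ^+ 2 - 1. Proof. by move: N_ge3; nra. Qed.
Let N2B4_gt0 : 0 < N ^+ 2 - 4. Proof. by move: N_ge3; nra. Qed.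
Let cos_gt0 : 0 < cos thD. Proof. exact: cos_gt0_pihalf. Qed.
Let pi_gt0 : 0 < pi :> R. Proof. exact: pi_gt0. Qed.

Local Ltac positivity := repeat first [ assumption | lra | apply: mulr_gt0 | apply: divr_gt0
  | apply: exprn_gt0 | rewrite invr_gt0 | rewrite sqrtr_gt0 ].

(* [pi] is generalized first: [field] would otherwise unfold it and could not discharge [pi != 0]. *)
Local Ltac beam_field := move: pi_gt0; move: (pi : R) => p p_gt0; field; rewrite !gt_eqF.

Lemma beam_discriminant : X * Z - Y ^+ 2 =
  (4 * pi ^+ 2 / c ^+ 2) ^+ 2 * a ^+ 2 * fc ^+ 2 * d ^+ 2 * cos thD ^+ 2 *
  (N ^+ 4 * (N ^+ 2 - 1) ^+ 2 * (N ^+ 2 - 4) / 540).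
Proof. by rewrite beamXE beamYE beamZE; field; rewrite !gt_eqF. Qed.

Lemma beam_discriminant_gt0 : 0 < X * Z - Y ^+ 2.
Proof. by rewrite beam_discriminant; positivity. Qed.

Lemma beamZ_gt0 : 0 < Z.
Proof. by rewrite beamZE; positivity. Qed.

Lemma beamX_gt0 : 0 < X.
Proof.
have N3 := N_ge3; have : 0 < 8 * N ^+ 2 - 3 * N - 11 by nra.
by rewrite beamXE => ?; positivity.
Qed.

Lemma beam_area : pi * N ^+ 2 / Num.sqrt (X * Z - Y ^+ 2) =
  3 * Num.sqrt 15 * c ^+ 2 * RD ^+ 2 /
  (pi * fc ^+ 2 * d ^+ 3 * cos thD * (N ^+ 2 - 1) * Num.sqrt (N ^+ 2 - 4)).
Proof.
have [sD [sD_gt0 sD2 ->]] := sqrtr_gt0_spec beam_discriminant_gt0; rewrite beam_discriminant in sD2.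
have [s4 [s4_gt0 s4_2 ->]] := sqrtr_gt0_spec N2B4_gt0.
have [s15 [s15_gt0 s15_2 ->]] := sqrtr_gt0_spec (ltr0Sn R 14).
apply: (pexpIrn (isT : (0 < 2)%N)); rewrite ?nnegrE; [apply/ltW; positivity.. |].
rewrite !expr_div_n !exprMn sD2 s4_2 s15_2.
by beam_field.
Qed.

Lemma beam_range_width : 2 * Num.sqrt (N ^+ 2 * Z / (X * Z - Y ^+ 2)) =
  6 * Num.sqrt 10 * c * RD ^+ 2 /
  (pi * fc * d ^+ 2 * Num.sqrt ((N ^+ 2 - 1) * (N ^+ 2 - 4))).
Proof.
have [sR [sR_gt0 sR2 ->]] := sqrtr_gt0_spec
  (divr_gt0 (mulr_gt0 (exprn_gt0 2 N_gt0) beamZ_gt0) beam_discriminant_gt0).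
rewrite beam_discriminant beamZE in sR2.
have [s14 [s14_gt0 s14_2 ->]] := sqrtr_gt0_spec (mulr_gt0 N2B1_gt0 N2B4_gt0).
have [s10 [s10_gt0 s10_2 ->]] := sqrtr_gt0_spec (ltr0Sn R 9).
apply: (pexpIrn (isT : (0 < 2)%N)); rewrite ?nnegrE; [apply/ltW; positivity.. |].
rewrite !expr_div_n !exprMn sR2 s14_2 s10_2.
by beam_field.
Qed.

Lemma beam_angle_width : 2 * Num.sqrt (N ^+ 2 * X / (X * Z - Y ^+ 2)) =
  c * Num.sqrt (6 * (16 * N ^+ 2 - 30 * N + 11)) /
  (pi * fc * d * cos thD * Num.sqrt ((N ^+ 2 - 1) * (N ^+ 2 - 4))).
Proof.
have [sA [sA_gt0 sA2 ->]] := sqrtr_gt0_spec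
  (divr_gt0 (mulr_gt0 (exprn_gt0 2 N_gt0) beamX_gt0) beam_discriminant_gt0).
rewrite beam_discriminant beamXE in sA2.
have [s14 [s14_gt0 s14_2 ->]] := sqrtr_gt0_spec (mulr_gt0 N2B1_gt0 N2B4_gt0).
have Q_gt0 : 0 < 6 * (16 * N ^+ 2 - 30 * N + 11) by move: N_ge3; nra.
have [sQ [sQ_gt0 sQ2 ->]] := sqrtr_gt0_spec Q_gt0.
apply: (pexpIrn (isT : (0 < 2)%N)); rewrite ?nnegrE; [apply/ltW; positivity.. |].
rewrite !expr_div_n !exprMn sA2 s14_2 sQ2.
by beam_field.
Qed.
End BeamPattern.

Theorem corollary1 (R : realType) (M : nat) (c fc d RD thD : R) :
  (3 <= M)%nat -> 0 < c -> 0 < fc -> 0 < d -> 0 < RD ->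
  - (pi / 2) < thD < pi / 2 ->
  let X := beamX M c d fc RD in
  let Y := beamY M c d fc RD thD in
  let Z := beamZ M c d fc thD in
  let E := [set p : R * R | quadE X Y Z RD thD p = (M%:R) ^+ 2] in
  [/\ Y ^+ 2 < X * Z,
      is_ellipse_centred E RD thD,
      ((lebesgue_measure \x lebesgue_measure)%E
          (enclosed X Y Z RD thD ((M%:R) ^+ 2)) =
        (3 * Num.sqrt 15 * c ^+ 2 * RD ^+ 2 /
          (pi * fc ^+ 2 * d ^+ 3 * cos thD * ((M%:R) ^+ 2 - 1)
             * Num.sqrt ((M%:R) ^+ 2 - 4)))%:E),
      (exists rmax rmin : R,
         [/\ is_max (fst @` E) rmax, is_min (fst @` E) rmin &
             rmax - rmin = 6 * Num.sqrt 10 * c * RD ^+ 2 /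
               (pi * fc * d ^+ 2 *
                  Num.sqrt (((M%:R) ^+ 2 - 1) * ((M%:R) ^+ 2 - 4)))]) &
      (exists tmax tmin : R,
         [/\ is_max (snd @` E) tmax, is_min (snd @` E) tmin &
             tmax - tmin =
               c * Num.sqrt (6 * (16 * (M%:R) ^+ 2 - 30 * M%:R + 11)) /
               (pi * fc * d * cos thD *
                  Num.sqrt (((M%:R) ^+ 2 - 1) * ((M%:R) ^+ 2 - 4)))])].
Proof.
move=> M_ge3 c_gt0 fc_gt0 d_gt0 RD_gt0 thD_range X Y Z E.
have Z_gt0 : 0 < Z by apply: beamZ_gt0.
have disc_gt0 : 0 < X * Z - Y ^+ 2 by apply: beam_discriminant_gt0.
have K_gt0 : 0 < (M%:R : R) ^+ 2 by rewrite exprn_gt0 // ltr0n (leq_trans _ M_ge3).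
have width x r : x + r - (x - r) = 2 * r :> R by ring.
split.
- by rewrite -subr_gt0.
- exact: quadE_level_is_ellipse.
- by rewrite enclosed_measure // beam_area.
- have [max_R min_R] := quadE_level_fst_extent RD thD Z_gt0 disc_gt0 _ (ltW K_gt0).
  eexists _, _; split; [exact: max_R | exact: min_R |].
  by rewrite width; apply: beam_range_width.
- have [max_th min_th] := quadE_level_snd_extent RD thD Z_gt0 disc_gt0 _ (ltW K_gt0).
  eexists _, _; split; [exact: max_th | exact: min_th |].
  by rewrite width; apply: beam_angle_width.
Qed.
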